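(* Assume Hypothesis (LD). Let $[x]_\rho\subset M_1$ be a closed $\rho$-basic class. Then for every $\theta>0$ there exists $\delta>0$ such that every tuple $\xi=(\xi_0,\dots,\xi_n)$ with $\xi_0,\xi_n\in[x]_\rho$ and $A_n(\xi)\le\delta$ satisfies $\xi_i\in N^\theta([x]_\rho)$ for all $i=0,\dots,n$.
   Context: Setting. Let $M\subset\mathbb{R}^d$ be closed; all topological notions are relative to $M$. Let $F:M\to M$ be continuous with $\|F\|:=\sup_{x\in M}\|F(x)\|<\infty$. For $A\subset M$ and $\delta>0$, put $N^\delta(A)=\{x\in M:\inf_{y\in A}\|x-y\|<\delta\}$, and let $d(x,y)=\max_i|x_i-y_i|$. Let $\{X^\varepsilon\}_{\varepsilon>0}$ be a family of time-homogeneous Markov chains on $M$ with transition kernels $p^\varepsilon(x,\Gamma)$. Assume $M=M_0\cup M_1$ (disjoint), where $M_0$ is closed, $F(M_0)\subseteq M_0$, $F(M_1)\subseteq M_1$, and $p^\varepsilon(x,M_1)=0$ for all $\varepsilon>0$ and $x\in M_0$. $\rho$-chain recurrence. Given $\rho:M\times M\to[0,+\infty]$, for $\xi=(\xi_0,\dots,\xi_n)\in M^{n+1}$ set $A_n(\xi)=\sum_{i=0}^{n-1}\rho(\xi_i,\xi_{i+1})$. Set $B_\rho(x,y)=\inf\{A_n(\xi):n\ge1,\ \xi\in M^{n+1},\ \xi_0=x,\ \xi_n=y\}$. Write $x<_\rho y$ if $B_\rho(x,y)=0$, and $x\sim_\rho y$ if $x<_\rho y$ and $y<_\rho x$. Let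 $\mathcal{R}_\rho=\{x:x\sim_\rho x\}$. The $\rho$-basic classes are the equivalence classes $[x]_\rho$ of $\sim_\rho$ on $\mathcal{R}_\rho$. Hypothesis (LD). There is $\rho:M\times M\to[0,+\infty]$ such that: (i) $\rho$ is continuous on $M_1\times M$; (ii) $\rho(x,y)=0$ iff $y=F(x)$; (iii) for every $\beta>0$, $\inf\{\rho(x,y):x,y\in M,\ d(F(x),y)>\beta\}>0$; (iv) lower bound: for every compact $K\subset M_1$, every open ball $U$ of $M$ and every $\eta>0$, there is $\varepsilon_0>0$ such that $\varepsilon\log p^\varepsilon(x,U)\ge-\inf_{y\in U}\rho(x,y)-\eta$ for all $x\in K$ and $\varepsilon<\varepsilon_0$; (v) upper bound: for every closed $C\subset M$ and every $\eta>0$, there is $\varepsilon_0>0$ such that $\varepsilon\log p^\varepsilon(x,C)\le-\inf_{y\in C}\rho(x,y)+\eta$ for all $x\in M$ and $\varepsilon<\varepsilon_0$. *)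

From Stdlib Require Import Reals Lra.
Open Scope R_scope.

(** Points of R^d are represented by functions nat -> R whose coordinates
    of index >= d vanish (see [InRd]). *)
Definition pt := nat -> R.

Definition InRd (d : nat) (x : pt) : Prop := forall i, (d <= i)%nat -> x i = 0.

Fixpoint sumd (d : nat) (f : nat -> R) : R :=
  match d with O => 0 | S k => sumd k f + f k end.

Fixpoint maxd (d : nat) (f : nat -> R) : R :=
  match d with O => 0 | S k => Rmax (maxd k f) (f k) end.

Definition norm (d : nat) (x : pt) : R := sqrt (sumd d (fun i => x i ^ 2)).
Definition dist (d : nat) (x y : pt) : R := norm d (fun i => x i - y i).

Definition dmax (d : nat) (x y : pt) : R := maxd d (fun i => Rabs (x i - y i)).

Definition closed_Rd (d : nat) (M : pt -> Prop) : Prop :=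
  (forall x, M x -> InRd d x) /\
  (forall x, InRd d x ->
     (forall e, 0 < e -> exists y, M y /\ dist d x y < e) -> M x).

Definition closed_in (d : nat) (M A : pt -> Prop) : Prop :=
  (forall x, A x -> M x) /\
  (forall x, M x ->
     (forall e, 0 < e -> exists y, A y /\ dist d x y < e) -> A x).

Definition seq_compact (d : nat) (K : pt -> Prop) : Prop :=
  forall u : nat -> pt, (forall n, K (u n)) ->
  exists (phi : nat -> nat) (l : pt),
    (forall n, (phi n < phi (S n))%nat) /\ K l /\
    (forall e, 0 < e -> exists N, forall n, (N <= n)%nat -> dist d (u (phi n)) l < e).

Definition ball_in (d : nat) (M : pt -> Prop) (c : pt) (r : R) : pt -> Prop :=
  fun y => M y /\ dist d y c < r.

Definition Nbhd (d : nat) (M A : pt -> Prop) (delta : R) : pt -> Prop :=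
  fun x => M x /\ exists y, A y /\ dist d x y < delta.

Inductive ereal : Type := Fin (r : R) | PInf.

Definition eplus (a b : ereal) : ereal :=
  match a, b with Fin x, Fin y => Fin (x + y) | _, _ => PInf end.

Definition ele (a : ereal) (r : R) : Prop :=
  match a with Fin x => x <= r | PInf => False end.
Definition elt (a : ereal) (r : R) : Prop :=
  match a with Fin x => x < r | PInf => False end.
Definition ege (a : ereal) (r : R) : Prop :=
  match a with Fin x => r <= x | PInf => True end.

Fixpoint Acost (rho : pt -> pt -> ereal) (xi : nat -> pt) (n : nat) : ereal :=
  match n with
  | O => Fin 0
  | S k => eplus (Acost rho xi k) (rho (xi k) (xi (S k)))
  end.

(** x <_rho y : B_rho(x,y) = 0, i.e. (rho being nonnegative) for every
    delta > 0 there is a chain of length n >= 1 in M from x to y with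
    A_n < delta. *)
Definition rho_lt (M : pt -> Prop) (rho : pt -> pt -> ereal) (x y : pt) : Prop :=
  forall delta, 0 < delta ->
  exists (n : nat) (xi : nat -> pt),
    (1 <= n)%nat /\ xi O = x /\ xi n = y /\
    (forall i, (i <= n)%nat -> M (xi i)) /\ elt (Acost rho xi n) delta.

Definition rho_sim M rho x y : Prop := rho_lt M rho x y /\ rho_lt M rho y x.

Definition rho_rec M rho x : Prop := M x /\ rho_sim M rho x x.

Definition basic_class M rho (x : pt) : pt -> Prop :=
  fun y => rho_rec M rho y /\ rho_sim M rho x y.

Definition Setting (d : nat) (M M0 M1 : pt -> Prop) (F : pt -> pt)
    (p : R -> pt -> (pt -> Prop) -> R) : Prop :=
  closed_Rd d M /\
  (forall x, M x -> M (F x)) /\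
  (forall x, M x -> forall e, 0 < e -> exists del, 0 < del /\
      forall y, M y -> dist d x y < del -> dist d (F x) (F y) < e) /\
  (exists B, forall x, M x -> norm d (F x) <= B) /\
  (forall x, M x <-> (M0 x \/ M1 x)) /\
  (forall x, ~ (M0 x /\ M1 x)) /\
  closed_in d M M0 /\
  (forall x, M0 x -> M0 (F x)) /\
  (forall x, M1 x -> M1 (F x)) /\
  (forall eps x G, 0 < eps -> 0 <= p eps x G) /\
  (forall eps x, 0 < eps -> M0 x -> p eps x M1 = 0).

Definition LD (d : nat) (M M0 M1 : pt -> Prop) (F : pt -> pt)
    (p : R -> pt -> (pt -> Prop) -> R) (rho : pt -> pt -> ereal) : Prop :=
  (forall x y r, M x -> M y -> rho x y = Fin r -> 0 <= r) /\
  (* (i) rho continuous on M1 x M (for the topology of [0,+oo]) *)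
  (forall x y, M1 x -> M y ->
     match rho x y with
     | Fin r => forall e, 0 < e -> exists del, 0 < del /\
          forall x' y', M1 x' -> M y' -> dist d x x' < del -> dist d y y' < del ->
          exists r', rho x' y' = Fin r' /\ Rabs (r' - r) < e
     | PInf => forall K, exists del, 0 < del /\
          forall x' y', M1 x' -> M y' -> dist d x x' < del -> dist d y y' < del ->
          ege (rho x' y') K /\ rho x' y' <> Fin K
     end) /\
  (forall x y, M x -> M y -> (rho x y = Fin 0 <-> y = F x)) /\
  (forall beta, 0 < beta -> exists c, 0 < c /\
     forall x y, M x -> M y -> dmax d (F x) y > beta -> ege (rho x y) c) /\
  (* (iv) lower bound: eps log p(x,U) >= - inf_{y in U} rho(x,y) - eta,
     written out as: for each y in U with rho(x,y) = r finite,
     p(x,U) > 0 and eps log p(x,U) >= - r - eta *)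
  (forall K c r eta, seq_compact d K -> (forall x, K x -> M1 x) ->
     M c -> 0 < r -> 0 < eta ->
     exists eps0, 0 < eps0 /\
     forall x eps, K x -> 0 < eps < eps0 ->
     forall y rr, ball_in d M c r y -> rho x y = Fin rr ->
       0 < p eps x (ball_in d M c r) /\
       eps * ln (p eps x (ball_in d M c r)) >= - rr - eta) /\
  (* (v) upper bound: eps log p(x,C) <= - inf_{y in C} rho(x,y) + eta,
     written out as: either p(x,C) = 0 (log = -oo), or p(x,C) > 0 and
     inf_{y in C} rho(x,y) <= eta - eps log p(x,C) *)
  (forall C eta, closed_in d M C -> 0 < eta ->
     exists eps0, 0 < eps0 /\
     forall x eps, M x -> 0 < eps < eps0 ->
       p eps x C = 0 \/
       (0 < p eps x C /\
        forall s, s > eta - eps * ln (p eps x C) ->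
          exists y, C y /\ elt (rho x y) s)).

From Pilot Require Import Defs.
From Stdlib Require Import Reals Lra Lia Classical ClassicalEpsilon.
From Coquelicot Require Compactness.
Open Scope R_scope.

(** Each point of C ends arbitrarily cheap chains, so by (LD)(iii) C lies within
    distance 1 of the bounded set F(M): C is compact, hence at positive distance
    from the closed set M0, and a small closed neighbourhood N of C lies in M1.
    Locally around each t in N, no chain from x back to x of small cost can step
    from near t to a point z far from C and on (escape_free_exists): if F t is
    near C, continuity of F puts z near C; otherwise F t is not equivalent to x,
    and inserting a cheap jump to or from F t (rho vanishes on the graph of F and
    is continuous on M1 x M) would connect x and F t cheaply in the forbidden
    direction.  A Lebesgue-number argument (uniform_gauge, from the gauge
    compactness of boxes) makes the scale uniform on N, and the first exit of a
    cheap chain from the neighbourhood of C contradicts it (confinement). *)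

(** * The max-distance d(x,y) = max_i |x_i - y_i| *)

Lemma maxd_ge n f i : (i < n)%nat -> f i <= maxd n f.
Proof.
  induction n as [|n IH]; intros Hi; [lia|]; simpl.
  destruct (Nat.eq_dec i n) as [->|Hne]; [apply Rmax_r|].
  eapply Rle_trans; [apply IH; lia | apply Rmax_l].
Qed.

Lemma maxd_le n f e : 0 <= e -> (forall i, (i < n)%nat -> f i <= e) -> maxd n f <= e.
Proof.
  intros He; induction n as [|n IH]; intros H; simpl; [lra|].
  apply Rmax_lub; [apply IH; intros; apply H | apply H]; lia.
Qed.

Lemma maxd_lt n f e : 0 < e -> (forall i, (i < n)%nat -> f i < e) -> maxd n f < e.
Proof.
  intros He; induction n as [|n IH]; intros H; simpl; [lra|].
  apply Rmax_lub_lt; [apply IH; intros; apply H | apply H]; lia.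
Qed.

Lemma dmax_nonneg d x y : 0 <= dmax d x y.
Proof.
  unfold dmax; induction d as [|d IH]; simpl; [lra|].
  eapply Rle_trans; [apply IH | apply Rmax_l].
Qed.

Lemma dmax_sym d x y : dmax d x y = dmax d y x.
Proof. unfold dmax; induction d as [|d IH]; simpl; auto. rewrite IH, Rabs_minus_sym; auto. Qed.

Lemma dmax_coord d x y i : (i < d)%nat -> Rabs (x i - y i) <= dmax d x y.
Proof. apply (maxd_ge d (fun i => Rabs (x i - y i))). Qed.

Lemma dmax_refl d x : dmax d x x = 0.
Proof.
  apply Rle_antisym; [|apply dmax_nonneg]. apply maxd_le; [lra|].
  intros; rewrite Rminus_diag, Rabs_R0; lra.
Qed.

Lemma dmax_tri d x y z : dmax d x z <= dmax d x y + dmax d y z.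
Proof.
  pose proof (dmax_nonneg d x y); pose proof (dmax_nonneg d y z).
  apply maxd_le; [lra|]. intros i Hi.
  replace (x i - z i) with ((x i - y i) + (y i - z i)) by ring.
  pose proof (Rabs_triang (x i - y i) (y i - z i)).
  pose proof (dmax_coord d x y i Hi); pose proof (dmax_coord d y z i Hi); lra.
Qed.

Lemma dmax_lt d x y e :
  0 < e -> (forall i, (i < d)%nat -> Rabs (x i - y i) < e) -> dmax d x y < e.
Proof. apply maxd_lt. Qed.

(** The topology of the statement is Euclidean while the estimates are done
    with [dmax]; the two are compared by [dmax <= dist <= kappa * dmax]. *)

Lemma sumd_nonneg n f : (forall j, 0 <= f j) -> 0 <= sumd n f.
Proof. intros H; induction n; simpl; [lra|]. specialize (H n); lra. Qed.

Lemma sumd_ge n f i : (forall j, 0 <= f j) -> (i < n)%nat -> f i <= sumd n f.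
Proof.
  intros H; induction n as [|n IH]; intros Hi; [lia|]; simpl.
  pose proof (sumd_nonneg n f H); pose proof (H n).
  destruct (Nat.eq_dec i n) as [->|Hne]; [lra|]. pose proof (IH ltac:(lia)); lra.
Qed.

Lemma sumd_le n f c : (forall j, (j < n)%nat -> f j <= c) -> sumd n f <= INR n * c.
Proof.
  induction n as [|n IH]; intros H; simpl sumd; [simpl; lra|]. rewrite S_INR.
  pose proof (IH ltac:(intros; apply H; lia)); pose proof (H n ltac:(lia)); lra.
Qed.

Lemma coord_le_norm d v i : (i < d)%nat -> Rabs (v i) <= norm d v.
Proof.
  intros Hi. unfold norm. rewrite <- sqrt_Rsqr_abs. apply sqrt_le_1_alt.
  rewrite Rsqr_pow2. apply (sumd_ge d (fun j => v j ^ 2)); auto.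
  intros; apply pow2_ge_0.
Qed.

Lemma dmax_le_dist d x y : dmax d x y <= Defs.dist d x y.
Proof.
  apply maxd_le; [apply sqrt_pos|].
  intros i Hi; apply (coord_le_norm d (fun i => x i - y i)); auto.
Qed.

Definition kappa (d : nat) : R := INR d + 1.

Lemma kappa_pos d : 0 < kappa d.
Proof. unfold kappa; pose proof (pos_INR d); lra. Qed.

Lemma dist_le_dmax d x y : Defs.dist d x y <= kappa d * dmax d x y.
Proof.
  unfold Defs.dist, norm. set (m := dmax d x y).
  assert (Hm : 0 <= m) by apply dmax_nonneg.
  assert (Hs : sumd d (fun i => (x i - y i) ^ 2) <= INR d * (m * m)).
  { apply sumd_le. intros j Hj. pose proof (dmax_coord d x y j Hj) as Hc; fold m in Hc.
    rewrite <- (pow2_abs (x j - y j)). pose proof (Rabs_pos (x j - y j)).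
    simpl. rewrite Rmult_1_r. apply Rmult_le_compat; lra. }
  pose proof (kappa_pos d) as Hk.
  rewrite <- (sqrt_square (kappa d * m)) by (apply Rmult_le_pos; lra). apply sqrt_le_1_alt.
  pose proof (pos_INR d). unfold kappa in *.
  assert (INR d * (m * m) <= (INR d + 1) * m * ((INR d + 1) * m)) by nra. lra.
Qed.

Lemma dist_lt_of_dmax d a b e : 0 < e -> dmax d a b < e / kappa d -> Defs.dist d a b < e.
Proof.
  intros He H. pose proof (dist_le_dmax d a b). pose proof (kappa_pos d).
  apply (Rmult_lt_compat_l (kappa d)) in H; auto.
  replace (kappa d * (e / kappa d)) with e in H by (field; lra). lra.
Qed.

(** * Compactness of closed bounded subsets of R^d *)

Fixpoint tuple_of (n k : nat) (x : pt) : Compactness.Tn n R :=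
  match n with O => tt | S n' => (x k, tuple_of n' (S k) x) end.

Fixpoint pt_of (n k : nat) : Compactness.Tn n R -> pt :=
  match n return Compactness.Tn n R -> pt with
  | O => fun _ _ => 0
  | S n' => fun t i => if Nat.eqb i k then fst t else pt_of n' (S k) (snd t) i
  end.

Lemma pt_of_out n : forall k t i, (i < k \/ k + n <= i)%nat -> pt_of n k t i = 0.
Proof.
  induction n as [|n IH]; intros k t i H; simpl; auto.
  destruct (Nat.eqb_spec i k); [lia|]. apply IH; lia.
Qed.

Lemma InRd_pt_of d t : InRd d (pt_of d 0 t).
Proof. intros i Hi. apply pt_of_out. lia. Qed.

Lemma tuple_of_bounded n : forall k x r,
  (forall i, (k <= i < k + n)%nat -> Rabs (x i) <= r) ->
  Compactness.bounded_n n (tuple_of n k (fun _ => - r)) (tuple_of n k (fun _ => r))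
    (tuple_of n k x).
Proof.
  induction n as [|n IH]; intros k x r H; simpl; auto. split.
  - specialize (H k ltac:(lia)).
    pose proof (Rle_abs (x k)); pose proof (Rle_abs (- x k)); rewrite Rabs_Ropp in *; lra.
  - apply IH. intros; apply H; lia.
Qed.

Lemma tuple_of_close n : forall k e x t, Compactness.close_n n e (tuple_of n k x) t ->
  forall i, (k <= i < k + n)%nat -> Rabs (x i - pt_of n k t i) < e.
Proof.
  induction n as [|n IH]; intros k e x t H i Hi; [lia|].
  destruct t as [t1 t2]. simpl in H |- *.
  destruct H as [H1 H2]. destruct (Nat.eqb_spec i k); [subst; auto|].
  apply IH; auto; lia.
Qed.

Lemma box_gauge d r (G : pt -> R) :
  (forall t, InRd d t -> 0 < G t) ->
  exists dd, 0 < dd /\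
    forall s, (forall i, (i < d)%nat -> Rabs (s i) <= r) ->
    exists t, InRd d t /\ dmax d s t < G t /\ dd <= G t.
Proof.
  intros HG.
  set (delta := fun T => RIneq.mkposreal (G (pt_of d 0 T)) (HG _ (InRd_pt_of d T))).
  destruct (Compactness.compactness_value d (tuple_of d 0 (fun _ => - r))
              (tuple_of d 0 (fun _ => r)) delta) as [dd Hdd].
  exists (RIneq.pos dd). split; [apply RIneq.cond_pos|].
  intros s Hs. apply NNPP; intros Hno.
  apply (Hdd _ (tuple_of_bounded d 0 s r ltac:(intros; apply Hs; lia))).
  intros [T [_ [Hclose Hle]]]. apply Hno. exists (pt_of d 0 T).
  split; [apply InRd_pt_of|]. split; [|exact Hle].
  apply dmax_lt; [apply HG, InRd_pt_of|].
  intros i Hi. apply (tuple_of_close d 0 _ s T Hclose). lia.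
Qed.

Lemma closed_in_gap d M A t : closed_in d M A -> M t -> ~ A t ->
  exists e, 0 < e /\ forall a, A a -> e <= dmax d t a.
Proof.
  intros [_ Hcl] Ht Hn.
  assert (exists e, 0 < e /\ forall a, A a -> e <= Defs.dist d t a) as [e [He Ha]].
  { apply NNPP; intros H. apply Hn, Hcl; auto. intros e He.
    apply NNPP; intros H2. apply H. exists e; split; auto.
    intros a Ha. apply Rnot_lt_le. intros Hlt. apply H2. exists a; auto. }
  exists (e / kappa d). split; [apply Rdiv_lt_0_compat; [auto | apply kappa_pos]|].
  intros a Ha'. apply Rnot_lt_le. intros Hlt.
  apply (dist_lt_of_dmax d t a e He) in Hlt. specialize (Ha a Ha'). lra.
Qed.

Definition bounded_by (d : nat) (S : pt -> Prop) (r : R) : Prop :=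
  forall s, S s -> forall i, (i < d)%nat -> Rabs (s i) <= r.

(** Lebesgue-number principle: if every point [t] of a closed bounded set [S]
    has some admissible radius ([Ok t e]), then [S] is covered by admissible
    balls whose radii are bounded below uniformly. *)
Lemma uniform_gauge d S r (Ok : pt -> R -> Prop) :
  closed_in d (InRd d) S -> bounded_by d S r ->
  (forall t, S t -> exists e, 0 < e /\ Ok t e) ->
  exists dd, 0 < dd /\
    forall s, S s -> exists t e, S t /\ Ok t e /\ dmax d s t < e /\ dd <= e.
Proof.
  intros HScl HSb HOk.
  assert (Hgauge : forall t, exists e, InRd d t -> 0 < e /\ (S t -> Ok t e) /\
            (~ S t -> forall s, S s -> e <= dmax d t s)).
  { intros t. destruct (classic (S t)) as [Ht|Ht].
    - destruct (HOk t Ht) as [e [He HOke]]. exists e; tauto.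
    - destruct (classic (InRd d t)) as [HR|HR]; [|exists 0; tauto].
      destruct (closed_in_gap d (InRd d) S t HScl HR Ht) as [e [He Hgap]].
      exists e; tauto. }
  destruct (choice _ Hgauge) as [G HG].
  destruct (box_gauge d r G) as [dd [Hdd Hcover]]; [intros t Ht; apply HG, Ht|].
  exists dd. split; auto. intros s Hs.
  destruct (Hcover s (HSb s Hs)) as [t [Ht [Hst Hdt]]].
  destruct (HG t Ht) as [_ [HOkt Hfar]].
  destruct (classic (S t)) as [HSt|HSt].
  - exists t, (G t). auto.
  - specialize (Hfar HSt s Hs). rewrite dmax_sym in Hfar. lra.
Qed.

Lemma closed_bounded_separation d M K A r :
  closed_in d (InRd d) K -> bounded_by d K r -> (forall k, K k -> M k) ->
  closed_in d M A -> (forall k, K k -> ~ A k) ->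
  exists r0, 0 < r0 /\ forall k a, K k -> A a -> r0 <= dmax d k a.
Proof.
  intros HKcl HKb HKM HAcl Hdisj.
  destruct (uniform_gauge d K r (fun t e => forall a, A a -> 2 * e <= dmax d t a))
    as [dd [Hdd Hcover]]; auto.
  { intros t Ht. destruct (closed_in_gap d M A t HAcl (HKM t Ht) (Hdisj t Ht))
      as [e [He Hgap]].
    exists (e / 2). split; [lra|]. intros a Ha; specialize (Hgap a Ha); lra. }
  exists dd. split; auto. intros k a Hk Ha.
  destruct (Hcover k Hk) as [t [e [_ [Hta [Hkt Hde]]]]].
  specialize (Hta a Ha). pose proof (dmax_tri d t k a). rewrite (dmax_sym d t k) in *. lra.
Qed.

Lemma closed_in_Rd d M A : closed_Rd d M -> closed_in d M A -> closed_in d (InRd d) A.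
Proof.
  intros [HMR HMcl] [HAM HAcl]. split; [intros; apply HMR, HAM; auto|].
  intros t Ht Happ. apply HAcl; auto. apply HMcl; auto.
  intros e He. destruct (Happ e He) as [a [Ha Hd]]. exists a; auto.
Qed.

Definition closed_nbhd (d : nat) (M A : pt -> Prop) (th : R) : pt -> Prop :=
  fun w => M w /\ forall e, 0 < e -> exists a, A a /\ dmax d w a < th + e.

Lemma closed_nbhd_closed d M A th :
  closed_Rd d M -> closed_in d (InRd d) (closed_nbhd d M A th).
Proof.
  intros [HMR HMcl]. split; [intros w [Hw _]; auto|].
  intros t Ht Happ. split.
  - apply HMcl; auto. intros e He. destruct (Happ e He) as [s [[Hs _] Hd]].
    exists s; auto.
  - intros e He. destruct (Happ (e / 2) ltac:(lra)) as [s [[_ Hs] Hd]].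
    destruct (Hs (e / 2) ltac:(lra)) as [a [Ha Hsa]]. exists a. split; auto.
    pose proof (dmax_tri d t s a). pose proof (dmax_le_dist d t s). lra.
Qed.

Lemma closed_nbhd_bounded d M A th r :
  0 < th -> bounded_by d A r -> bounded_by d (closed_nbhd d M A th) (r + 2 * th).
Proof.
  intros Hth HAb w [_ Hw] i Hi. destruct (Hw th Hth) as [a [Ha Hwa]].
  pose proof (dmax_coord d w a i Hi). pose proof (HAb a Ha i Hi).
  replace (w i) with (a i + (w i - a i)) by ring.
  pose proof (Rabs_triang (a i) (w i - a i)). lra.
Qed.

(** * Costs of chains in [0,+oo] *)

Lemma eplus_assoc a b c : eplus a (eplus b c) = eplus (eplus a b) c.
Proof. destruct a, b, c; simpl; auto. rewrite Rplus_assoc; auto. Qed.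

Lemma ege_eplus a b : ege a 0 -> ege b 0 -> ege (eplus a b) 0.
Proof. destruct a, b; simpl; auto. lra. Qed.

Lemma ele_eplus_split a b s : ege a 0 -> ege b 0 -> ele (eplus a b) s -> ele a s /\ ele b s.
Proof. destruct a, b; simpl; try tauto. lra. Qed.

Lemma elt_eplus a b s1 s2 : elt a s1 -> elt b s2 -> elt (eplus a b) (s1 + s2).
Proof. destruct a, b; simpl; try tauto. lra. Qed.

Lemma elt_ele_eplus a b s1 s2 : elt a s1 -> ele b s2 -> elt (eplus a b) (s1 + s2).
Proof. destruct a, b; simpl; try tauto. lra. Qed.

Lemma ele_elt_eplus a b s1 s2 : ele a s1 -> elt b s2 -> elt (eplus a b) (s1 + s2).
Proof. destruct a, b; simpl; try tauto. lra. Qed.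

Lemma elt_zero_eplus b s : elt b s -> elt (eplus (Fin 0) b) s.
Proof. destruct b; simpl; auto. lra. Qed.

Lemma Acost_ext rho a b n :
  (forall j, (j <= n)%nat -> a j = b j) -> Acost rho a n = Acost rho b n.
Proof.
  induction n as [|n IH]; intros H; simpl; auto.
  rewrite IH by (intros; apply H; lia). rewrite (H n), (H (S n)) by lia. auto.
Qed.

Lemma Acost_split rho a m k :
  Acost rho a (m + k) = eplus (Acost rho a m) (Acost rho (fun j => a (m + j)%nat) k).
Proof.
  induction k as [|k IH].
  - rewrite Nat.add_0_r. simpl. destruct (Acost rho a m); simpl; auto.
    rewrite Rplus_0_r; auto.
  - rewrite Nat.add_succ_r. simpl. rewrite IH, <- eplus_assoc, Nat.add_succ_r. auto.
Qed.

Definition nonneg_on (M : pt -> Prop) (rho : pt -> pt -> ereal) : Prop :=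
  forall x y r, M x -> M y -> rho x y = Fin r -> 0 <= r.

Lemma Acost_nonneg M rho xi n : nonneg_on M rho ->
  (forall i, (i <= n)%nat -> M (xi i)) -> ege (Acost rho xi n) 0.
Proof.
  intros Hnn. induction n as [|n IH]; intros H; simpl; [lra|]. apply ege_eplus.
  - apply IH; intros; apply H; lia.
  - destruct (rho (xi n) (xi (S n))) eqn:E; simpl; auto.
    apply (Hnn (xi n) (xi (S n))); auto; apply H; lia.
Qed.

Lemma segment_cost_le M rho xi n m s : nonneg_on M rho -> (m <= n)%nat ->
  (forall i, (i <= n)%nat -> M (xi i)) -> ele (Acost rho xi n) s ->
  ele (Acost rho xi m) s /\ ele (Acost rho (fun j => xi (m + j)%nat) (n - m)) s.
Proof.
  intros Hnn Hmn H Hc. replace n with (m + (n - m))%nat in Hc by lia.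
  rewrite Acost_split in Hc. apply ele_eplus_split in Hc; auto;
    apply (Acost_nonneg M); auto; intros; apply H; lia.
Qed.

Lemma step_cost_le M rho xi n j s : nonneg_on M rho -> (j < n)%nat ->
  (forall i, (i <= n)%nat -> M (xi i)) -> ele (Acost rho xi n) s ->
  ele (rho (xi j) (xi (S j))) s.
Proof.
  intros Hnn Hj H Hc.
  destruct (segment_cost_le M rho xi n j s Hnn ltac:(lia) H Hc) as [_ Hsuf].
  destruct (segment_cost_le M rho (fun k => xi (j + k)%nat) (n - j) 1 s Hnn ltac:(lia)
              ltac:(intros; apply H; lia) Hsuf) as [Hstep _].
  simpl in Hstep. rewrite Nat.add_0_r, Nat.add_1_r in Hstep.
  destruct (rho (xi j) (xi (S j))); simpl in *; lra.
Qed.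

(** * Chains and cheap connections *)

Definition path_in (M : pt -> Prop) (n : nat) (xi : nat -> pt) (u v : pt) : Prop :=
  xi O = u /\ xi n = v /\ forall i, (i <= n)%nat -> M (xi i).

Definition concat (m : nat) (a b : nat -> pt) (j : nat) : pt :=
  if Nat.leb j m then a j else b (j - m)%nat.

Lemma path_concat M m k a b u v w :
  path_in M m a u v -> path_in M k b v w ->
  path_in M (m + k) (concat m a b) u w /\
  forall rho, Acost rho (concat m a b) (m + k) = eplus (Acost rho a m) (Acost rho b k).
Proof.
  intros [Ha0 [Ham HaM]] [Hb0 [Hbk HbM]]. unfold concat. split; [split; [|split]|].
  - simpl; auto.
  - destruct (Nat.leb_spec (m + k) m).
    + replace k with O in * by lia. rewrite Nat.add_0_r. congruence.
    + replace (m + k - m)%nat with k by lia. auto.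
  - intros i Hi. destruct (Nat.leb_spec i m); [apply HaM | apply HbM]; lia.
  - intros rho. rewrite Acost_split. f_equal.
    + apply Acost_ext. intros j Hj. apply Nat.leb_le in Hj. rewrite Hj. auto.
    + apply Acost_ext. intros j Hj. destruct (Nat.leb_spec (m + j) m).
      * replace j with O by lia. rewrite Nat.add_0_r. congruence.
      * f_equal. lia.
Qed.

Definition jump (u v : pt) (j : nat) : pt := if Nat.eqb j 0 then u else v.

Lemma path_jump M u v : M u -> M v -> path_in M 1 (jump u v) u v.
Proof. intros Hu Hv. repeat split; auto. intros [|i] _; auto. Qed.

Lemma path_shift M xi m n : (m <= n)%nat -> (forall i, (i <= n)%nat -> M (xi i)) ->
  path_in M (n - m) (fun j => xi (m + j)%nat) (xi m) (xi n).
Proof.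
  intros Hmn H. repeat split.
  - rewrite Nat.add_0_r; auto.
  - f_equal; lia.
  - intros i Hi; apply H; lia.
Qed.

Definition cheap (M : pt -> Prop) (rho : pt -> pt -> ereal) (u v : pt) (e : R) : Prop :=
  exists n xi, path_in M n xi u v /\ elt (Acost rho xi n) e.

Definition cheap_pos (M : pt -> Prop) (rho : pt -> pt -> ereal) (u v : pt) (e : R) : Prop :=
  exists n xi, (1 <= n)%nat /\ path_in M n xi u v /\ elt (Acost rho xi n) e.

Lemma rho_lt_cheap_pos M rho u v e : rho_lt M rho u v -> 0 < e -> cheap_pos M rho u v e.
Proof.
  intros H He. destruct (H e He) as [n [xi [Hn [H0 [Hn' [HM Hc]]]]]].
  exists n, xi. repeat split; auto.
Qed.

Lemma rho_lt_intro M rho u v :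
  (forall e, 0 < e -> cheap_pos M rho u v e) -> rho_lt M rho u v.
Proof.
  intros H e He. destruct (H e He) as [n [xi [Hn [[H0 [Hn' HM]] Hc]]]].
  exists n, xi. repeat split; auto.
Qed.

Lemma rho_lt_cheap M rho u v e : rho_lt M rho u v -> 0 < e -> cheap M rho u v e.
Proof.
  intros H He. destruct (rho_lt_cheap_pos M rho u v e H He) as [n [xi [_ Hc]]].
  exists n, xi; auto.
Qed.

Lemma rho_lt_trans M rho u v w :
  rho_lt M rho u v -> rho_lt M rho v w -> rho_lt M rho u w.
Proof.
  intros H1 H2. apply rho_lt_intro. intros e He.
  destruct (rho_lt_cheap_pos M rho u v (e / 2) H1 ltac:(lra)) as [m [a [Hm [Ha Hca]]]].
  destruct (rho_lt_cheap_pos M rho v w (e / 2) H2 ltac:(lra)) as [k [b [Hk [Hb Hcb]]]].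
  destruct (path_concat M m k a b u v w Ha Hb) as [Hab Hcost].
  exists (m + k)%nat, (concat m a b). split; [lia|]. split; auto.
  rewrite Hcost. replace e with (e / 2 + e / 2) by lra. apply elt_eplus; auto.
Qed.

Lemma basic_class_intro M rho x y :
  M y -> rho_lt M rho x y -> rho_lt M rho y x -> basic_class M rho x y.
Proof.
  intros HM H1 H2. repeat split; auto; eapply rho_lt_trans; eauto.
Qed.

Lemma not_rho_lt M rho u v : ~ rho_lt M rho u v ->
  exists dt, 0 < dt /\ ~ cheap_pos M rho u v dt.
Proof.
  intros Hn. apply NNPP; intros Hno. apply Hn, rho_lt_intro. intros e He.
  apply NNPP; intros Hc. apply Hno. exists e; auto.
Qed.

Lemma cheap_then_path M rho u v w k b e s :
  cheap M rho u v e -> path_in M k b v w -> ele (Acost rho b k) s ->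
  cheap M rho u w (e + s).
Proof.
  intros [m [a [Ha Hca]]] Hb Hcb. destruct (path_concat M m k a b u v w Ha Hb) as [Hab Hc].
  exists (m + k)%nat, (concat m a b). split; auto. rewrite Hc. apply elt_ele_eplus; auto.
Qed.

Lemma path_then_cheap M rho u v w k b e s :
  path_in M k b u v -> ele (Acost rho b k) s -> cheap M rho v w e ->
  cheap M rho u w (s + e).
Proof.
  intros Hb Hcb [m [a [Ha Hca]]]. destruct (path_concat M k m b a u v w Hb Ha) as [Hba Hc].
  exists (k + m)%nat, (concat k b a). split; auto. rewrite Hc. apply ele_elt_eplus; auto.
Qed.

Lemma cheap_then_jump M rho u v w e1 e2 :
  cheap M rho u v e1 -> M w -> elt (rho v w) e2 -> cheap_pos M rho u w (e1 + e2).
Proof.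
  intros [m [a [Ha Hca]]] Hw Hvw. assert (Hv : M v) by (destruct Ha as [_ [<- HM]]; apply HM; lia).
  destruct (path_concat M m 1 a (jump v w) u v w Ha (path_jump M v w Hv Hw)) as [Hp Hc].
  exists (m + 1)%nat, (concat m a (jump v w)). split; [lia|]. split; auto.
  rewrite Hc. apply elt_eplus; auto. apply elt_zero_eplus; auto.
Qed.

Lemma jump_then_cheap M rho u v w e1 e2 :
  M u -> elt (rho u v) e1 -> cheap M rho v w e2 -> cheap_pos M rho u w (e1 + e2).
Proof.
  intros Hu Huv [m [a [Ha Hca]]]. assert (Hv : M v) by (destruct Ha as [<- [_ HM]]; apply HM; lia).
  destruct (path_concat M 1 m (jump u v) a u v w (path_jump M u v Hu Hv) Ha) as [Hp Hc].
  exists (1 + m)%nat, (concat 1 (jump u v) a). split; [lia|]. split; auto.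
  rewrite Hc. apply elt_eplus; auto. apply elt_zero_eplus; auto.
Qed.

Lemma cheap_mono M rho u v e e' : cheap M rho u v e -> e <= e' -> cheap M rho u v e'.
Proof.
  intros [n [xi [Hp Hc]]] He. exists n, xi. split; auto.
  destruct (Acost rho xi n); simpl in *; lra.
Qed.

Lemma cheap_pos_mono M rho u v e e' :
  cheap_pos M rho u v e -> e <= e' -> cheap_pos M rho u v e'.
Proof.
  intros [n [xi [Hn [Hp Hc]]]] He. exists n, xi. do 2 (split; auto).
  destruct (Acost rho xi n); simpl in *; lra.
Qed.

Lemma cheap_to_chain_point M rho x xi n m e s : nonneg_on M rho -> (m <= n)%nat ->
  (forall i, (i <= n)%nat -> M (xi i)) -> ele (Acost rho xi n) s ->
  rho_lt M rho x (xi O) -> 0 < e -> cheap M rho x (xi m) (e + s).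
Proof.
  intros Hnn Hmn HM Hc Hx He.
  destruct (segment_cost_le M rho xi n m s Hnn Hmn HM Hc) as [Hpre _].
  apply (cheap_then_path M rho x (xi O) (xi m) m xi); auto.
  - apply rho_lt_cheap; auto.
  - repeat split; auto. intros; apply HM; lia.
Qed.

Lemma cheap_from_chain_point M rho x xi n m e s : nonneg_on M rho -> (m <= n)%nat ->
  (forall i, (i <= n)%nat -> M (xi i)) -> ele (Acost rho xi n) s ->
  rho_lt M rho (xi n) x -> 0 < e -> cheap M rho (xi m) x (s + e).
Proof.
  intros Hnn Hmn HM Hc Hx He.
  destruct (segment_cost_le M rho xi n m s Hnn Hmn HM Hc) as [_ Hsuf].
  apply (path_then_cheap M rho (xi m) (xi n) x (n - m) (fun j => xi (m + j)%nat));
    auto using path_shift, rho_lt_cheap.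
Qed.

Lemma first_exit (P : nat -> Prop) n : P O ->
  (forall j, (j <= n)%nat -> P j) \/ exists i, (1 <= i <= n)%nat /\ P (i - 1)%nat /\ ~ P i.
Proof.
  intros H0. induction n as [|n [IH|[i [Hi Hexit]]]].
  - left; intros j Hj; replace j with O by lia; auto.
  - destruct (classic (P (S n))) as [Hs|Hs].
    + left; intros j Hj. destruct (Nat.eq_dec j (S n)) as [->|]; auto. apply IH; lia.
    + right; exists (S n). replace (S n - 1)%nat with n by lia. split; [lia|]. split; auto.
  - right. exists i; split; [lia | auto].
Qed.

(** * Confinement of cheap chains near a closed basic class *)

Lemma pos_below a b : 0 < a -> 0 < b -> exists e, 0 < e /\ e <= a /\ e <= b.
Proof.
  intros Ha Hb. exists (Rmin a b).
  split; [apply Rmin_glb_lt; auto | split; [apply Rmin_l | apply Rmin_r]].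
Qed.

Section Confinement.

Variables (d : nat) (M M0 M1 : pt -> Prop) (F : pt -> pt) (rho : pt -> pt -> ereal) (B : R).

Hypothesis M_closed : closed_Rd d M.
Hypothesis F_maps : forall y, M y -> M (F y).
Hypothesis F_cont : forall y, M y -> forall e, 0 < e -> exists del, 0 < del /\
  forall y', M y' -> Defs.dist d y y' < del -> Defs.dist d (F y) (F y') < e.
Hypothesis F_bounded : forall y, M y -> norm d (F y) <= B.
Hypothesis M_split : forall y, M y <-> (M0 y \/ M1 y).
Hypothesis M0_M1_disjoint : forall y, ~ (M0 y /\ M1 y).
Hypothesis M0_closed : closed_in d M M0.
Hypothesis F_M1 : forall y, M1 y -> M1 (F y).
Hypothesis rho_nonneg : nonneg_on M rho.
Hypothesis rho_cont : forall y z, M1 y -> M z ->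
  match rho y z with
  | Fin r => forall e, 0 < e -> exists del, 0 < del /\
      forall y' z', M1 y' -> M z' -> Defs.dist d y y' < del -> Defs.dist d z z' < del ->
      exists r', rho y' z' = Fin r' /\ Rabs (r' - r) < e
  | PInf => forall K, exists del, 0 < del /\
      forall y' z', M1 y' -> M z' -> Defs.dist d y y' < del -> Defs.dist d z z' < del ->
      ege (rho y' z') K /\ rho y' z' <> Fin K
  end.
Hypothesis rho_zero : forall y z, M y -> M z -> (rho y z = Fin 0 <-> z = F y).
Hypothesis rho_positive_off_graph : forall beta, 0 < beta -> exists c, 0 < c /\
  forall y z, M y -> M z -> dmax d (F y) z > beta -> ege (rho y z) c.

Lemma M1_M y : M1 y -> M y.
Proof. intros; apply M_split; auto. Qed.

Lemma F_cont_dmax a e : M a -> 0 < e -> exists eta, 0 < eta /\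
  forall a', M a' -> dmax d a a' < eta -> dmax d (F a) (F a') < e.
Proof.
  intros Ha He. destruct (F_cont a Ha e He) as [del [Hdel Hcont]].
  exists (del / kappa d). split; [apply Rdiv_lt_0_compat; [auto | apply kappa_pos]|].
  intros a' Ha' Hd. pose proof (dmax_le_dist d (F a) (F a')).
  pose proof (Hcont a' Ha' (dist_lt_of_dmax d a a' del Hdel Hd)). lra.
Qed.

(** Since [rho] vanishes on the graph of [F] and is continuous on [M1 x M],
    steps starting near [a] in [M1] and ending near [F a] are cheap. *)
Lemma rho_small_near_graph a e : M1 a -> 0 < e -> exists eta, 0 < eta /\
  forall a' b', M1 a' -> M b' -> dmax d a a' < eta -> dmax d (F a) b' < eta ->
  elt (rho a' b') e.
Proof.
  intros Ha He. pose proof (M1_M a Ha) as HMa.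
  pose proof (rho_cont a (F a) Ha (F_maps a HMa)) as Hcont.
  rewrite (proj2 (rho_zero a (F a) HMa (F_maps a HMa)) eq_refl) in Hcont.
  destruct (Hcont e He) as [del [Hdel Hclose]].
  exists (del / kappa d). split; [apply Rdiv_lt_0_compat; [auto | apply kappa_pos]|].
  intros a' b' Ha' Hb' Hda Hdb.
  destruct (Hclose a' b' Ha' Hb' (dist_lt_of_dmax d a a' del Hdel Hda)
              (dist_lt_of_dmax d (F a) b' del Hdel Hdb)) as [r [-> Hr]].
  rewrite Rminus_0_r in Hr. pose proof (Rle_abs r). simpl; lra.
Qed.

Lemma cheap_step_near_F beta : 0 < beta -> exists c, 0 < c /\
  forall a b s, M a -> M b -> ele (rho a b) s -> s < c -> dmax d (F a) b <= beta.
Proof.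
  intros Hbeta. destruct (rho_positive_off_graph beta Hbeta) as [c [Hc Hfar]].
  exists c. split; auto. intros a b s Ha Hb Hs Hsc. apply Rnot_lt_le; intros Hlt.
  specialize (Hfar a b Ha Hb ltac:(lra)). destruct (rho a b); simpl in *; lra.
Qed.

(** Every point reachable from [x] by arbitrarily cheap chains lies within
    distance 1 of the bounded set [F(M)]; in particular basic classes are
    bounded. *)
Lemma basic_class_bounded x : bounded_by d (basic_class M rho x) (B + 1).
Proof.
  destruct (cheap_step_near_F 1 ltac:(lra)) as [c [Hc Hnear]].
  intros y [[HMy _] [Hxy _]] i Hi.
  destruct (rho_lt_cheap_pos M rho x y (c / 2) Hxy ltac:(lra))
    as [n [a [Hn [[Ha0 [Han HaM]] Hcost]]]].
  assert (Hlast : ele (rho (a (n - 1)%nat) (a (S (n - 1)))) (c / 2)).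
  { apply (step_cost_le M rho a n); auto; [lia|].
    destruct (Acost rho a n); simpl in *; lra. }
  replace (S (n - 1)) with n in Hlast by lia. rewrite Han in Hlast.
  pose proof (HaM (n - 1)%nat ltac:(lia)) as HMa.
  pose proof (Hnear _ _ _ HMa HMy Hlast ltac:(lra)) as Hd.
  set (Fa := F (a (n - 1)%nat)) in *. rewrite dmax_sym in Hd.
  pose proof (dmax_coord d y Fa i Hi).
  pose proof (Rle_trans _ _ _ (coord_le_norm d Fa i Hi) (F_bounded _ HMa)).
  replace (y i) with (Fa i + (y i - Fa i)) by ring.
  pose proof (Rabs_triang (Fa i) (y i - Fa i)). lra.
Qed.

Variable x : pt.
Hypothesis class_closed : closed_in d M (basic_class M rho x).
Hypothesis class_in_M1 : forall y, basic_class M rho x y -> M1 y.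

Let C : pt -> Prop := basic_class M rho x.

Lemma class_in_M y : C y -> M y.
Proof. intros [[Hy _] _]; auto. Qed.

(** The compact class [C] is at positive distance from the closed set [M0],
    so its small closed neighbourhoods lie in [M1]. *)
Lemma class_nbhd_in_M1 : exists r, 0 < r /\
  forall th w, 0 < th -> th < r -> closed_nbhd d M C th w -> M1 w.
Proof.
  destruct (closed_bounded_separation d M C M0 (B + 1)) as [r0 [Hr0 Hsep]];
    auto using class_in_M.
  - apply (closed_in_Rd d M); auto.
  - apply basic_class_bounded.
  - intros k Hk Hk0. apply (M0_M1_disjoint k); split; auto.
  - exists (r0 / 2). split; [lra|]. intros th w Hth Hthr [Hw Hnear].
    destruct (proj1 (M_split w) Hw) as [H0|H1]; auto. exfalso.
    destruct (Hnear th Hth) as [c [Hc Hwc]]. specialize (Hsep c w Hc H0).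
    rewrite dmax_sym in Hwc. lra.
Qed.

(** [escape_free th t e]: near [t] (at scale [e]) no chain from [x] back to
    [x] of cost below [e] can take two steps close to the graph of [F] whose
    middle point [z] is at distance at least [th] from [C]. *)
Definition escape_free (th : R) (t : pt) (e : R) : Prop :=
  forall w z y, M1 w -> M z -> M y ->
  dmax d w t < e -> dmax d (F w) z < e -> dmax d (F z) y < e ->
  (forall c, C c -> th <= dmax d z c) ->
  cheap M rho x w e -> cheap M rho y x e -> False.

(** If [F t] is close to [C], points near [F w] for [w] near [t] are close to
    [C] by continuity of [F]. *)
Lemma escape_free_near_class th t c : 0 < th -> M t -> C c -> dmax d (F t) c < th / 2 ->
  exists e, 0 < e /\ escape_free th t e.
Proof.
  intros Hth Ht Hc Htc. destruct (F_cont_dmax t (th / 4) Ht ltac:(lra)) as [eta [Heta HF]].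
  destruct (pos_below eta (th / 4) Heta ltac:(lra)) as [e [He [He1 He2]]].
  exists e. split; auto. intros w z y Hw _ _ Hwt Hwz _ Hfar _ _.
  rewrite dmax_sym in Hwt. specialize (HF w (M1_M w Hw) ltac:(lra)).
  specialize (Hfar c Hc).
  pose proof (dmax_tri d z (F w) c). pose proof (dmax_tri d (F w) (F t) c).
  rewrite (dmax_sym d z (F w)), (dmax_sym d (F w) (F t)) in *. lra.
Qed.

(** If [F t] is not in [C], then [F t] is not equivalent to [x]: chains
    between them in one direction cost at least some [dt > 0]. A cheap escape
    near [t] would pass through [F t] at small extra cost, by continuity of
    [rho] at the graph points [(t, F t)] and [(F t, F (F t))]. *)
Lemma escape_free_off_class th t : M1 t -> ~ C (F t) ->
  exists e, 0 < e /\ escape_free th t e.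
Proof.
  intros Ht HnC. pose proof (M1_M t Ht) as HMt. pose proof (F_maps t HMt) as HMFt.
  assert (Hdt : exists dt, 0 < dt /\
            (~ cheap_pos M rho x (F t) dt \/ ~ cheap_pos M rho (F t) x dt)).
  { destruct (classic (rho_lt M rho x (F t))) as [H1|H1];
      [destruct (classic (rho_lt M rho (F t) x)) as [H2|H2]|].
    - exfalso. apply HnC, basic_class_intro; auto.
    - destruct (not_rho_lt M rho (F t) x H2) as [dt [Hdt Hn]]; eauto.
    - destruct (not_rho_lt M rho x (F t) H1) as [dt [Hdt Hn]]; eauto. }
  destruct Hdt as [dt [Hdt Hdir]].
  destruct (rho_small_near_graph t (dt / 2) Ht ltac:(lra)) as [eta1 [Heta1 Hjump1]].
  destruct (rho_small_near_graph (F t) (dt / 2) (F_M1 t Ht) ltac:(lra))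
    as [eta2 [Heta2 Hjump2]].
  destruct (F_cont_dmax (F t) (eta2 / 2) HMFt ltac:(lra)) as [eta4 [Heta4 HF4]].
  destruct (F_cont_dmax t (eta4 / 2) HMt ltac:(lra)) as [eta3 [Heta3 HF3]].
  destruct (pos_below eta1 eta3 Heta1 Heta3) as [e1 [He1 [He11 He13]]].
  destruct (pos_below (eta4 / 2) (eta2 / 2) ltac:(lra) ltac:(lra)) as [e2 [He2 [He24 He22]]].
  destruct (pos_below e1 e2 He1 He2) as [e3 [He3 [He31 He32]]].
  destruct (pos_below e3 (dt / 2) He3 ltac:(lra)) as [e [He [He_3 He_dt]]].
  exists e. split; auto. intros w z y Hw Hz Hy Hwt Hwz Hzy _ Hxw Hyx.
  rewrite dmax_sym in Hwt.
  assert (Hwarp1 : elt (rho w (F t)) (dt / 2)).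
  { apply Hjump1; auto; [lra | rewrite dmax_refl; lra]. }
  assert (HFtz : dmax d (F t) z < eta4).
  { pose proof (HF3 w (M1_M w Hw) ltac:(lra)). pose proof (dmax_tri d (F t) (F w) z). lra. }
  assert (Hwarp2 : elt (rho (F t) y) (dt / 2)).
  { apply Hjump2; auto; [rewrite dmax_refl; lra|].
    pose proof (HF4 z Hz HFtz). pose proof (dmax_tri d (F (F t)) (F z) y). lra. }
  destruct Hdir as [Hno | Hno]; apply Hno.
  - apply (cheap_pos_mono M rho x (F t) (e + dt / 2)); [|lra].
    apply (cheap_then_jump M rho x w (F t)); auto.
  - apply (cheap_pos_mono M rho (F t) x (dt / 2 + e)); [|lra].
    apply (jump_then_cheap M rho (F t) y x); auto.
Qed.

Lemma escape_free_exists th t : 0 < th -> M1 t -> exists e, 0 < e /\ escape_free th t e.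
Proof.
  intros Hth Ht. destruct (classic (exists c, C c /\ dmax d (F t) c < th / 2))
    as [[c [Hc Htc]] | Hfar].
  - apply (escape_free_near_class th t c); auto using M1_M.
  - apply escape_free_off_class; auto. intros HC. apply Hfar.
    exists (F t). rewrite dmax_refl. split; auto; lra.
Qed.

(** The first point [z] of such a chain at
    max-distance at least [th] from [C] is preceded by a point [w] of the
    closed [th]-neighbourhood [N] of [C]; [N] is compact and contained in
    [M1], so a uniform scale [dg] of escape-freeness covers it, and for small
    cost the configuration around [z] is an escape at that scale. *)
Lemma confinement theta : 0 < theta -> exists delta, 0 < delta /\
  forall n xi, (forall i, (i <= n)%nat -> M (xi i)) -> C (xi O) -> C (xi n) ->
  ele (Acost rho xi n) delta -> forall i, (i <= n)%nat -> Nbhd d M C theta (xi i).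
Proof.
  intros Htheta.
  destruct class_nbhd_in_M1 as [r [Hr HN_M1]].
  destruct (pos_below (theta / kappa d) (r / 2)) as [th [Hth [Hth_theta Hth_r]]];
    [apply Rdiv_lt_0_compat; auto using kappa_pos | lra |].
  set (N := closed_nbhd d M C th).
  destruct (uniform_gauge d N (B + 1 + 2 * th) (escape_free th)) as [dg [Hdg Hcover]].
  { apply closed_nbhd_closed; auto. }
  { apply closed_nbhd_bounded; auto. apply basic_class_bounded. }
  { intros t Ht. apply escape_free_exists; auto. apply (HN_M1 th); auto; lra. }
  destruct (cheap_step_near_F (dg / 2) ltac:(lra)) as [cb [Hcb Hstep]].
  destruct (pos_below (cb / 2) (dg / 2)) as [delta [Hdelta [Hdelta_cb Hdelta_dg]]]; try lra.
  exists delta. split; auto. intros n xi HM H0 Hn Hcost.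
  destruct (first_exit (fun j => exists c, C c /\ dmax d (xi j) c < th) n)
    as [Hnear | [i [Hi [Hprev Hexit]]]].
  - exists (xi O). split; auto. rewrite dmax_refl; lra.
  - intros j Hj. destruct (Hnear j Hj) as [c [Hc Hjc]]. split; auto.
    exists c. split; auto. apply dist_lt_of_dmax; auto. lra.
  - exfalso.
    assert (Hin : (i < n)%nat).
    { destruct (Nat.eq_dec i n) as [->|]; [|lia]. exfalso. apply Hexit.
      exists (xi n). split; auto. rewrite dmax_refl; lra. }
    assert (HNw : N (xi (i - 1)%nat)).
    { split; [apply HM; lia|]. intros e He. destruct Hprev as [c [Hc Hwc]].
      exists c; split; auto; lra. }
    destruct (Hcover _ HNw) as [t [e [_ [Hfree [Hwt Hdge]]]]].
    assert (Hsteps : forall j, (j < n)%nat -> dmax d (F (xi j)) (xi (S j)) <= dg / 2).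
    { intros j Hj. apply (Hstep _ _ delta); try (apply HM; lia); try lra.
      apply (step_cost_le M rho xi n); auto. }
    apply (Hfree (xi (i - 1)%nat) (xi i) (xi (S i))); auto; try (apply HM; lia).
    + apply (HN_M1 th); auto; lra.
    + pose proof (Hsteps (i - 1)%nat ltac:(lia)). replace (S (i - 1)) with i in * by lia. lra.
    + pose proof (Hsteps i Hin). lra.
    + intros c Hc. apply Rnot_lt_le. intros Hlt. apply Hexit. eauto.
    + apply (cheap_mono M rho x _ (dg / 2 + delta)); [|lra].
      apply (cheap_to_chain_point M rho x xi n); auto; [lia | apply H0 | lra].
    + apply (cheap_mono M rho _ x (delta + dg / 2)); [|lra].
      apply (cheap_from_chain_point M rho x xi n); auto; [apply Hn | lra].
Qed.

End Confinement.

(** The theorem is [confinement] for the parts of [Setting] and (LD) it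
    uses. *)
Theorem mainTheorem11 (d : nat) (M M0 M1 : pt -> Prop) (F : pt -> pt)
    (p : R -> pt -> (pt -> Prop) -> R) (rho : pt -> pt -> ereal) (x : pt) :
  Setting d M M0 M1 F p ->
  LD d M M0 M1 F p rho ->
  rho_rec M rho x ->
  closed_in d M (basic_class M rho x) ->
  (forall y, basic_class M rho x y -> M1 y) ->
  forall theta, 0 < theta ->
  exists delta, 0 < delta /\
    forall (n : nat) (xi : nat -> pt),
      (forall i, (i <= n)%nat -> M (xi i)) ->
      basic_class M rho x (xi O) ->
      basic_class M rho x (xi n) ->
      ele (Acost rho xi n) delta ->
      forall i, (i <= n)%nat -> Nbhd d M (basic_class M rho x) theta (xi i).
Proof.
  intros Hsetting HLD _ Hclosed HM1 theta Htheta.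
  destruct Hsetting as [HMcl [HMF [HFc [[B HB] [HMU [Hdisj [HM0cl [_ [HF1 _]]]]]]]]].
  destruct HLD as [Hnn [Hcont [Hzero [Hoff _]]]].
  apply (confinement d M M0 M1 F rho B); assumption.
Qed.
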